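(* Let $M$ (dimension $m$) and $N$ (dimension $n$) be smooth manifolds carrying torsion-free (symmetric) affine connections ${}^M\nabla$ and ${}^N\nabla$, with local components ${}^M\Gamma^k_{ij}(x)$ and ${}^N\Gamma^\sigma_{\alpha\lambda}(\phi)$ in local coordinates $(x^i)$ on $M$ and $(\phi^\sigma)$ on $N$. Consider the fibred manifold $\pi: M\times N\to M$ with adapted coordinates $(x^i,\phi^\sigma)$ and induced jet coordinates $\phi^\sigma_i,\phi^\sigma_{ij}$ on the second jet prolongation. Let $g^{ij}(x)$ be the components of a (symmetric, nondegenerate) inverse metric on $M$, and let $h_{\sigma\nu}(x,\phi)$ be smooth functions, symmetric in $\sigma,\nu$ and nondegenerate, so that for each fixed $x$ they are the components of a metric $h_x$ on $N$ (which may differ from fibre to fibre). Put $B^{ij}_{\sigma\nu}=g^{ij}(x)h_{\sigma\nu}(x,\phi)$ and consider the dynamical form $E=E_\nu\,\omega^\nu\wedge\omega_0$, where $\omega^\nu={\rm d}\phi^\nu-\phi^\nu_i{\rm d}x^i$, $\omega_0={\rm d}x^1\wedge\cdots\wedge{\rm d}x^m$, and $$E_\nu=B^{ij}_{\sigma\nu}\left(\phi^\sigma_{ij}-{}^M\Gamma^k_{ij}\phi^\sigma_k+{}^N\Gamma^\sigma_{\alpha\lambda}\phi^\alpha_i\phi^\lambda_j\right).$$ Suppose that (1) for each fixed $x$, the connection ${}^N\nabla$ is compatible with the metric $h_x$, i.e. $\dfrac{\partial h_{\mu\nu}}{\partial\phi^\lambda}={}^N\Gamma^\sigma_{\mu\lambda}h_{\sigma\nu}+{}^N\Gamma^\sigma_{\nu\lambda}h_{\sigma\mu}$;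 and (2) the dependence of $h$ on the base coordinates is governed by ${}^M\nabla$ and $g$ via $$h_{\mu\nu}\left(g^{ij}\,{}^M\Gamma^l_{ij}+\frac{\partial g^{lp}}{\partial x^p}\right)=-\frac{\partial h_{\mu\nu}}{\partial x^p}\,g^{lp}\quad\text{for all } l,\mu,\nu;$$ equivalently, writing ${}^M\Gamma^l_{ij}={}^M\bar\Gamma^l_{ij}+S^l_{ij}$ with ${}^M\bar\Gamma$ the Levi-Civita connection of $g$ and $S$ a tensor, $g^{ij}S^l_{ij}=-\frac{1}{n}h^{\mu\nu}\frac{\partial h_{\mu\nu}}{\partial x^p}g^{lp}$. Then the dynamical form $E$ is variational, i.e. $B=g\otimes h$ solves the weak inverse problem of the calculus of variations for the geodesic mapping equations $\phi^\sigma_{ij}-{}^M\Gamma^k_{ij}\phi^\sigma_k+{}^N\Gamma^\sigma_{\alpha\lambda}\phi^\alpha_i\phi^\lambda_j=0$. In particular ${}^N\nabla$ must be metric (fibrewise), whereas ${}^M\nabla$ need not be the Levi-Civita connection of $g$.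
   Context: A map $\phi:M\to N$ (immersion, $\dim M\le\dim N$) between manifolds with affine connections is called geodesic if it maps every geodesic curve of $(M,{}^M\nabla)$ to a geodesic curve of $(N,{}^N\nabla)$ (with the same parameter); a sufficient condition is the system $\phi^\sigma_{ij}-{}^M\Gamma^k_{ij}\phi^\sigma_k+{}^N\Gamma^\sigma_{\alpha\lambda}\phi^\alpha_i\phi^\lambda_j=0$. A dynamical form $E=E_\nu\,\omega^\nu\wedge\omega_0$ on the second jet prolongation of $M\times N\to M$ is called variational if it is (locally) the Euler–Lagrange form of some Lagrangian, i.e. $E_\nu=\frac{\partial L}{\partial\phi^\nu}-{\rm d}_k\frac{\partial L}{\partial\phi^\nu_k}+\dots$ for some Lagrangian $L$; the weak inverse problem asks for a multiplier $B^{ij}_{\sigma\nu}(x,\phi)$ (independent of derivatives) making the multiplied equations variational. Here ${\rm d}_k$ denotes the total derivative. *)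

From HB Require Import structures.
From mathcomp Require Import all_boot all_order all_algebra.
From mathcomp Require Import all_classical all_reals all_analysis.
Set Implicit Arguments. Unset Strict Implicit. Unset Printing Implicit Defensive.
Import Order.TTheory GRing.Theory Num.Theory.
Import numFieldNormedType.Exports.
Local Open Scope ring_scope.
Local Open Scope classical_set_scope.

Section Defs.
Variable R : realType.

Definition ebase (k : nat) (i : 'I_k) : 'rV[R]_k := delta_mx 0 i.

Definition dpart (k : nat) (i : 'I_k) (F : 'rV[R]_k -> R) : 'rV[R]_k -> R :=
  fun z => 'D_(ebase i) F z.

Definition iterD (k : nat) (s : seq 'I_k) (F : 'rV[R]_k -> R) : 'rV[R]_k -> R :=
  foldr (@dpart k) F s.

Definition smooth_on (k : nat) (U : set 'rV[R]_k) (F : 'rV[R]_k -> R) : Prop :=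
  forall s : seq 'I_k, forall z, U z ->
    {for z, continuous (iterD s F)} /\
    (forall i : 'I_k, derivable (iterD s F) z (ebase i)).

Definition smooth_on2 (m n : nat) (U : set 'rV[R]_m) (V : set 'rV[R]_n)
  (F : 'rV[R]_m -> 'rV[R]_n -> R) : Prop :=
  smooth_on [set z : 'rV[R]_(m + n) | U (lsubmx z) /\ V (rsubmx z)]
    (fun z => F (lsubmx z) (rsubmx z)).

(* smoothness of a first-order Lagrangian L(x, phi, phi_i) on U x V x R^{mn}
   (jet coordinate phi^sigma_i is p i sigma) *)
Definition smooth_lagr (m n : nat) (U : set 'rV[R]_m) (V : set 'rV[R]_n)
  (L : 'rV[R]_m -> 'rV[R]_n -> 'M[R]_(m, n) -> R) : Prop :=
  smooth_on [set z : 'rV[R]_(m + n + m * n) |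
               U (lsubmx (lsubmx z)) /\ V (rsubmx (lsubmx z))]
    (fun z => L (lsubmx (lsubmx z)) (rsubmx (lsubmx z)) (vec_mx (rsubmx z))).

Definition smooth_section (m n : nat) (U0 : set 'rV[R]_m) (V0 : set 'rV[R]_n)
  (f : 'rV[R]_m -> 'rV[R]_n) : Prop :=
  (forall x, U0 x -> V0 (f x)) /\
  (forall s : 'I_n, smooth_on U0 (fun x => f x 0 s)).

Definition jet1 (m n : nat) (f : 'rV[R]_m -> 'rV[R]_n) (x : 'rV[R]_m)
  : 'M[R]_(m, n) :=
  \matrix_(i < m, s < n) dpart i (fun y => f y 0 s) x.

Definition jet2 (m n : nat) (f : 'rV[R]_m -> 'rV[R]_n) (i j : 'I_m) (s : 'I_n)
  (x : 'rV[R]_m) : R :=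
  dpart i (dpart j (fun y => f y 0 s)) x.

(* GM k i j = {}^M Gamma^k_{ij},  GN s a l = {}^N Gamma^s_{a l}. *)
Definition geodE (m n : nat)
  (GM : 'I_m -> 'I_m -> 'I_m -> 'rV[R]_m -> R)
  (GN : 'I_n -> 'I_n -> 'I_n -> 'rV[R]_n -> R)
  (g : 'I_m -> 'I_m -> 'rV[R]_m -> R)
  (h : 'I_n -> 'I_n -> 'rV[R]_m -> 'rV[R]_n -> R)
  (f : 'rV[R]_m -> 'rV[R]_n) (nu : 'I_n) (x : 'rV[R]_m) : R :=
  \sum_(s < n) \sum_(i < m) \sum_(j < m)
    g i j x * h s nu x (f x) *
    (jet2 f i j s x
     - \sum_(k < m) GM k i j x * jet1 f x k s
     + \sum_(a < n) \sum_(l < n) GN s a l (f x) * jet1 f x i a * jet1 f x j l).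

(* Euler-Lagrange expression of a first-order Lagrangian L(x, phi, phi_i),
   evaluated along j^2 f at x:
   dL/dphi^nu - d_k (dL/dphi^nu_k)  (total derivatives along the section are
   ordinary derivatives of the composite). *)
Definition dL_dy (m n : nat) (L : 'rV[R]_m -> 'rV[R]_n -> 'M[R]_(m, n) -> R)
  (nu : 'I_n) (x : 'rV[R]_m) (y : 'rV[R]_n) (p : 'M[R]_(m, n)) : R :=
  'D_(ebase nu) (fun y' => L x y' p) y.

Definition dL_dp (m n : nat) (L : 'rV[R]_m -> 'rV[R]_n -> 'M[R]_(m, n) -> R)
  (k : 'I_m) (nu : 'I_n) (x : 'rV[R]_m) (y : 'rV[R]_n) (p : 'M[R]_(m, n)) : R :=
  'D_(delta_mx k nu) (fun p' => L x y p') p.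

Definition EL (m n : nat) (L : 'rV[R]_m -> 'rV[R]_n -> 'M[R]_(m, n) -> R)
  (f : 'rV[R]_m -> 'rV[R]_n) (nu : 'I_n) (x : 'rV[R]_m) : R :=
  dL_dy L nu x (f x) (jet1 f x)
  - \sum_(k < m) dpart k (fun x' => dL_dp L k nu x' (f x') (jet1 f x')) x.

End Defs.

(* The Lagrangian is L = -1/2 g^{ij}(x) h_{st}(x, phi) phi^s_i phi^t_j, with
   momentum dL/dphi^nu_k = - g^{kj} h_{nu t} phi^t_j.  Expanding the total
   derivative d_k of the momentum, the Euler-Lagrange expression splits into
   three groups matching the three groups of E_nu:
   - the second-order terms agree by the symmetry of h;
   - the terms with d_k g and d_{x^k} h add up, by hypothesis (2), to the term
     with the connection on M;
   - the terms with d h / d phi: by (1) and torsion-freeness, h_{r nu} Gamma^r_{st}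
     is given by the Koszul formula 1/2 (d_s h_{t nu} + d_t h_{s nu} - d_nu h_{st}),
     and what remains is an antisymmetric tensor in (s, t) contracted with the
     symmetric g^{ij} phi^s_i phi^t_j.
   The chain rule for x |-> h(x, f x) needs h to be differentiable, which follows
   from the continuity of its partial derivatives. *)

From Pilot Require Import Defs.
From HB Require Import structures.
From mathcomp Require Import all_boot all_order all_algebra.
From mathcomp Require Import all_classical all_reals all_analysis.
From mathcomp Require Import ring.
Import Order.TTheory GRing.Theory Num.Theory.
Import numFieldNormedType.Exports.
Local Open Scope ring_scope.
Local Open Scope classical_set_scope.
Set Implicit Arguments. Unset Strict Implicit. Unset Printing Implicit Defensive.

(** * Smooth functions on open sets *)

Section Smoothness.
Variable R : realType.

Lemma derive_comp_affine (V1 V2 W : normedModType R) (F : V2 -> W) (a : V1 -> V2)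
    (u w : V1) (v : V2) :
  (forall t : R, a (t *: u + w) = t *: v + a w) ->
  'D_u (F \o a) w = 'D_v F (a w) /\ (derivable (F \o a) w u <-> derivable F (a w) v).
Proof.
move=> a_affine; rewrite /derive /derivable.
have -> : (fun t : R => t^-1 *: ((F \o a \o shift w) (t *: u) - (F \o a) w)) =
          (fun t : R => t^-1 *: ((F \o shift (a w)) (t *: v) - F (a w))).
  by apply: funext => t; rewrite /= a_affine.
by [].
Qed.

Definition cont_derivable_at k (F : 'rV[R]_k -> R) z :=
  {for z, continuous F} /\ forall i, derivable F z (ebase R i).

Lemma cont_derivable_at_eq k (F G : 'rV[R]_k -> R) z :
  (\forall y \near z, F y = G y) -> cont_derivable_at F z -> cont_derivable_at G z.
Proof.
move=> FG [cF dF]; split => [|i]; last exact: near_eq_derivable (dF i).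
move: cF; rewrite /prop_for /continuous_at (nbhs_singleton FG) => cF.
exact: cvg_trans (near_eq_cvg FG) cF.
Qed.

Variables (k : nat) (U : set 'rV[R]_k).
Hypothesis U_open : open U.

Lemma near_open z : U z -> \forall y \near z, U y.
Proof. by move=> Uz; move: U_open; rewrite openE => /(_ z Uz). Qed.

Lemma iterD_rcons s i (F : 'rV[R]_k -> R) : Defs.iterD (rcons s i) F = Defs.iterD s (dpart i F).
Proof. by rewrite /Defs.iterD foldr_rcons. Qed.

Lemma iterD_eq_on (F G : 'rV[R]_k -> R) :
  (forall z, U z -> F z = G z) -> forall s z, U z -> Defs.iterD s F z = Defs.iterD s G z.
Proof.
move=> FG; elim=> [|i s IH] z Uz /=; first exact: FG.
by apply: near_eq_derive; apply: filterS (near_open Uz) => y Uy; apply: IH.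
Qed.

Lemma smooth_on_eq (F G : 'rV[R]_k -> R) :
  (forall z, U z -> F z = G z) -> smooth_on U F -> smooth_on U G.
Proof.
move=> FG sF s z Uz; apply: (@cont_derivable_at_eq _ (Defs.iterD s F)); last exact: sF.
by apply: filterS (near_open Uz) => y Uy; apply: iterD_eq_on.
Qed.

Lemma smooth_on_at F z : smooth_on U F -> U z -> cont_derivable_at F z.
Proof. by move=> sF; exact: sF [::] z. Qed.

Lemma smooth_on_dpart F i : smooth_on U F -> smooth_on U (dpart i F).
Proof. by move=> sF s z Uz; rewrite -iterD_rcons; apply: sF. Qed.

Lemma smooth_on_class (K : ('rV[R]_k -> R) -> Prop) :
  (forall F, K F -> forall z, U z -> cont_derivable_at F z) ->
  (forall F i, K F -> exists2 G, K G & forall z, U z -> dpart i F z = G z) ->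
  forall F, K F -> smooth_on U F.
Proof.
move=> K_base K_dpart F KF s; elim/last_ind: s F KF => [|s i IH] F KF z Uz.
  exact: K_base.
rewrite iterD_rcons; have [G KG FG] := K_dpart F i KF.
apply: (@cont_derivable_at_eq _ (Defs.iterD s G)); last exact: IH.
by apply: filterS (near_open Uz) => y Uy; apply: iterD_eq_on => // w Uw; rewrite FG.
Qed.

Lemma smooth_on_cst (c : R) : smooth_on U (fun=> c).
Proof.
apply: (@smooth_on_class (fun F => exists c, F = fun=> c)); last by exists c.
- move=> _ [c' ->] z _; split=> [|i]; [exact: cst_continuous | exact: derivable_cst].
- move=> _ i [c' ->]; exists (fun=> 0); first by exists 0.
  by move=> z _; exact: derive_cst.
Qed.

Definition sum_of_products (l : seq (('rV[R]_k -> R) * ('rV[R]_k -> R))) : 'rV[R]_k -> R :=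
  fun z => \sum_(p <- l) p.1 z * p.2 z.

Definition smooth_pairs (l : seq (('rV[R]_k -> R) * ('rV[R]_k -> R))) :=
  forall p, List.In p l -> smooth_on U p.1 /\ smooth_on U p.2.

Lemma sum_of_products_nil : sum_of_products [::] = cst 0.
Proof. by apply: funext => z; rewrite /sum_of_products big_nil. Qed.

Lemma sum_of_products_cons p l :
  sum_of_products (p :: l) = p.1 * p.2 + sum_of_products l.
Proof. by apply: funext => z; rewrite /sum_of_products big_cons. Qed.

Lemma cont_derivable_at_sum_of_products l z :
  smooth_pairs l -> U z -> cont_derivable_at (sum_of_products l) z.
Proof.
elim: l => [|[A B] l IH] sl Uz.
  rewrite sum_of_products_nil; split=> [|i]; [exact: cst_continuous | exact: derivable_cst].
have [sA sB] := sl _ (or_introl erefl).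
have [cl dl] := IH (fun p lp => sl p (or_intror lp)) Uz.
have [cA dA] := smooth_on_at sA Uz; have [cB dB] := smooth_on_at sB Uz.
rewrite sum_of_products_cons; split => [|i].
  exact: continuousD (continuousM cA cB) cl.
exact: derivableD (derivableM (dA i) (dB i)) (dl i).
Qed.

Definition dpart_pairs i (l : seq (('rV[R]_k -> R) * ('rV[R]_k -> R))) :=
  [seq (dpart i p.1, p.2) | p <- l] ++ [seq (p.1, dpart i p.2) | p <- l].

Lemma smooth_pairs_dpart i l : smooth_pairs l -> smooth_pairs (dpart_pairs i l).
Proof.
move=> sl p /List.in_app_iff [] /List.in_map_iff [[A B] [<- /sl [sA sB]]].
  exact: conj (smooth_on_dpart i sA) sB.
exact: conj sA (smooth_on_dpart i sB).
Qed.

Lemma dpart_sum_of_products l i : smooth_pairs l ->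
  forall z, U z -> dpart i (sum_of_products l) z = sum_of_products (dpart_pairs i l) z.
Proof.
elim: l => [|[A B] l IH] sl z Uz.
  by rewrite sum_of_products_nil /dpart derive_cst.
have [sA sB] := sl _ (or_introl erefl).
have sl' : smooth_pairs l := fun p lp => sl p (or_intror lp).
have [_ dA] := smooth_on_at sA Uz; have [_ dB] := smooth_on_at sB Uz.
have [_ dl] := cont_derivable_at_sum_of_products sl' Uz.
rewrite sum_of_products_cons /dpart deriveD //; last exact: derivableM.
rewrite -/(dpart i (sum_of_products l) z) (IH sl' z Uz) deriveM //.
rewrite /sum_of_products /dpart_pairs /= !(big_cat, big_map, big_cons) /=.
by rewrite /dpart /GRing.scale /=; ring.
Qed.

Lemma smooth_on_sum_of_products l : smooth_pairs l -> smooth_on U (sum_of_products l).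
Proof.
move=> sl; apply: (@smooth_on_class (fun F => exists2 l, smooth_pairs l & F = sum_of_products l));
  last by exists l.
- by move=> _ [l' sl' ->] z; exact: cont_derivable_at_sum_of_products.
- move=> _ i [l' sl' ->]; exists (sum_of_products (dpart_pairs i l'));
    last exact: dpart_sum_of_products.
  by exists (dpart_pairs i l'); first exact: smooth_pairs_dpart.
Qed.

Lemma smooth_onM F G : smooth_on U F -> smooth_on U G -> smooth_on U (fun z => F z * G z).
Proof.
move=> sF sG; apply: smooth_on_eq (@smooth_on_sum_of_products [:: (F, G)] _).
  by move=> z _; rewrite /sum_of_products big_cons big_nil addr0.
by move=> p [<-|[]]; exact: conj sF sG.
Qed.

Lemma smooth_onD F G : smooth_on U F -> smooth_on U G -> smooth_on U (fun z => F z + G z).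
Proof.
move=> sF sG; have s1 := smooth_on_cst 1.
apply: smooth_on_eq (@smooth_on_sum_of_products [:: (F, fun=> 1); (G, fun=> 1)] _).
  by move=> z _; rewrite /sum_of_products !big_cons big_nil addr0 !mulr1.
by move=> p [<-|[<-|[]]]; [exact: conj sF s1 | exact: conj sG s1].
Qed.

Lemma smooth_on_sum (I : Type) (r : seq I) (F : I -> 'rV[R]_k -> R) :
  (forall i, smooth_on U (F i)) -> smooth_on U (fun z => \sum_(i <- r) F i z).
Proof.
move=> sF; elim: r => [|i r IH].
  by apply: smooth_on_eq (smooth_on_cst 0) => z _; rewrite big_nil.
by apply: smooth_on_eq (smooth_onD (sF i) IH) => z _; rewrite big_cons.
Qed.

End Smoothness.

Section Coordinates.
Variable R : realType.

Lemma is_derive_coord a b (M v : 'M[R]_(a, b)) i j :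
  is_derive M v (fun N : 'M[R]_(a, b) => N i j) (v i j).
Proof.
have coord_shift (t : R) : (t *: v + M) i j = t *: v i j + M i j by rewrite !mxE.
have [D_eq D_ex] :=
  @derive_comp_affine R _ R^o _ id (fun N : 'M[R]_(a, b) => N i j) v M (v i j) coord_shift.
by apply: DeriveDef; [apply/D_ex; exact: derivable_id | rewrite D_eq derive_id].
Qed.

Lemma ebaseE k (i j : 'I_k) : ebase R i 0 j = (j == i)%:R.
Proof. by rewrite /ebase mxE eqxx. Qed.

Lemma smooth_on_coord k (D : set 'rV[R]_k) j : open D -> smooth_on D (fun z => z 0 j).
Proof.
move=> D_open.
apply: (@smooth_on_class _ _ _ D_open
  (fun G => (exists j, G = fun z => z 0 j) \/ exists c, G = fun=> c)); last by left; exists j.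
- move=> G [[j' ->]|[c ->]] z _; split=> [|i].
  + exact: differentiable_continuous (differentiable_coord z 0 j').
  + by have [] := is_derive_coord z (ebase R i) 0 j'.
  + exact: cst_continuous.
  + exact: derivable_cst.
- move=> G i [[j' ->]|[c ->]]; last first.
    by exists (fun=> 0); [right; exists 0 | move=> z _; exact: derive_cst].
  exists (fun=> ebase R i 0 j'); first by right; eexists.
  by move=> z _; rewrite /dpart; have [_ ->] := is_derive_coord z (ebase R i) 0 j'.
Qed.

Lemma smooth_on_comp a b (W : set 'rV[R]_a) (D : set 'rV[R]_b)
    (pi : {linear 'rV[R]_b -> 'rV[R]_a}) (F : 'rV[R]_a -> R) :
  open W -> open D -> continuous pi -> (forall z, D z -> W (pi z)) ->
  (forall i, pi (ebase R i) = 0 \/ exists j, pi (ebase R i) = ebase R j) ->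
  smooth_on W F -> smooth_on D (F \o pi).
Proof.
move=> W_open D_open pi_cont DW pi_ebase sF.
have pi_shift t z i : pi (t *: ebase R i + z) = t *: pi (ebase R i) + pi z.
  by rewrite linearD linearZ.
apply: (@smooth_on_class _ _ _ D_open (fun G => exists2 F, smooth_on W F & G = F \o pi));
  last by exists F.
- move=> _ [G sG ->] z Dz; have [cG dG] := smooth_on_at sG (DW z Dz).
  split=> [|i]; first exact: continuous_comp (pi_cont z) cG.
  apply/(@derive_comp_affine R _ _ _ G pi (ebase R i) z _ (pi_shift ^~ z ^~ i)).2.
  by case: (pi_ebase i) => [->|[j ->]]; [exact: derivable0 | exact: dG].
- move=> _ i [G sG ->].
  have D_eq z := (@derive_comp_affine R _ _ _ G pi (ebase R i) z _ (pi_shift ^~ z ^~ i)).1.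
  case: (pi_ebase i) => [pi0|[j pij]].
    exists ((fun=> 0) \o pi); first by exists (fun=> 0); [exact: smooth_on_cst | reflexivity].
    by move=> z _; rewrite /dpart D_eq pi0 derive0.
  exists (dpart j G \o pi); first by exists (dpart j G); [exact: smooth_on_dpart | reflexivity].
  by move=> z _; rewrite /dpart D_eq pij.
Qed.

Lemma lsubmx_ebase p q (i : 'I_(p + q)) :
  lsubmx (ebase R i) = 0 \/ exists j, lsubmx (ebase R i) = ebase R j.
Proof.
case: (split_ordP i) => j ->; [right; exists j | left]; apply/rowP => j'; rewrite !mxE /=.
  by rewrite eq_lshift.
by rewrite eq_lrshift.
Qed.

End Coordinates.

(** * Continuous partial derivatives and the chain rule *)

Section Differentiability.
Variable R : realType.

Lemma MVT_origin (phi phi' : R -> R) (c : R) :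
  (forall t : R, `|t| <= `|c| -> is_derive t 1 phi (phi' t)) ->
  exists2 xi, `|xi| <= `|c| & phi c - phi 0 = phi' xi * c.
Proof.
move=> dphi.
have MVT_in (a b : R) : a <= b -> (forall t, a <= t -> t <= b -> `|t| <= `|c|) ->
    exists2 xi, `|xi| <= `|c| & phi b - phi a = phi' xi * (b - a).
  move=> ab abc.
  have [||xi] := @MVT_segment _ phi phi' a b ab.
  - by move=> t; rewrite in_itv /= => /andP[a_t t_b]; apply/dphi/abc; exact: ltW.
  - apply: derivable_within_continuous => t; rewrite in_itv /= => /andP[a_t t_b].
    by have [] := dphi t (abc t a_t t_b).
  by rewrite in_itv /= => /andP[axi xib] E; exists xi => //; exact: abc.
have [c0|c0] := leP 0 c.
  have [|xi xic] := MVT_in 0 c c0; last by rewrite subr0; exists xi.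
  by move=> t t0 tc; rewrite !ger0_norm // (le_trans t0).
have [|xi xic E] := MVT_in c 0 (ltW c0).
  by move=> t ct t0; rewrite !ler0_norm ?lerN2 // ltW.
by exists xi => //; rewrite -opprB E sub0r mulrN opprK.
Qed.

Lemma increment_along_line (V : normedModType R) (F : V -> R) (w v : V) (c d e : R) :
  (forall t, `|t| <= `|c| ->
    derivable F (w + t *: v) v /\ `|'D_v F (w + t *: v) - d| <= e) ->
  `|F (w + c *: v) - F w - c * d| <= e * `|c|.
Proof.
move=> near_d.
pose line t : V := w + t *: v.
have line_shift (t s : R) : line (s *: 1 + t) = s *: v + line t.
  by rewrite /line scalerDl addrCA [s *: 1]mulr1.
have dphi (t : R) : `|t| <= `|c| -> is_derive t 1 (F \o line) ('D_v F (line t)).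
  move=> tc; have [D_eq D_ex] := derive_comp_affine F (line_shift t).
  by apply: DeriveDef; [apply/D_ex; exact: (near_d t tc).1 | exact: D_eq].
have [xi xic E] := MVT_origin dphi.
have -> : F w = (F \o line) 0 by rewrite /= /line scale0r addr0.
rewrite -[F (w + c *: v)]/((F \o line) c) E [c * d]mulrC -mulrBl normrM.
by rewrite ler_wpM2r // (near_d xi xic).2.
Qed.

Lemma ler_mx_coord a b (M : 'M[R]_(a, b)) i j : `|M i j| <= `|M|.
Proof.
rewrite [leRHS]/Num.Def.normr /= mx_normrE.
exact: le_trans (le_bigmax _ _ (i, j)).
Qed.

Lemma mx_norm_le a b (M : 'M[R]_(a, b)) c : 0 <= c ->
  (forall i j, `|M i j| <= c) -> `|M| <= c.
Proof. by move=> c0 Mc; rewrite [leLHS]/Num.Def.normr /= mx_normrE (bigmax_le _ c0) // => -[]. Qed.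

Definition row_dot a (d : 'I_a -> R) (v : 'rV[R]_a) : R := \sum_i v 0 i * d i.

Lemma row_dot_is_linear a (d : 'I_a -> R) : linear (row_dot d).
Proof.
move=> c u v; rewrite /row_dot scaler_sumr -big_split; apply: eq_bigr => i _.
by rewrite !mxE /GRing.scale /= mulrDl mulrA.
Qed.

HB.instance Definition _ a (d : 'I_a -> R) :=
  GRing.isLinear.Build R 'rV[R]_a R _ (row_dot d) (row_dot_is_linear d).

Lemma row_dot_continuous a (d : 'I_a -> R) : continuous (row_dot d).
Proof.
move=> z; have -> : row_dot d = \sum_i (fun v : 'rV[R]_a => v 0 i * d i).
  by rewrite fct_sumE.
apply/differentiable_continuous/differentiable_sum => i.
exact: differentiableM (differentiable_coord _ _ _) (differentiable_cst _ _).
Qed.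

Lemma partial_increments_estimate a (F : 'rV[R]_a -> R) z (r e : R) : 0 <= e ->
  (forall y, `|y - z| < r -> forall i,
     derivable F y (ebase R i) /\ `|dpart i F y - dpart i F z| <= e) ->
  forall h, `|h| < r -> `|F (h + z) - F z - row_dot (fun i => dpart i F z) h| <= a%:R * e * `|h|.
Proof.
move=> e0 near_z h hr.
(* telescope along the broken line z = w 0, ..., w a = h + z, which changes
   one coordinate at a time *)
pose w (k : nat) : 'rV[R]_a := z + \row_j (if (j < k)%N then h 0 j else 0).
have w0 : w 0%N = z by apply/rowP => j; rewrite !mxE addr0.
have wa : w a = h + z by rewrite addrC; apply/rowP => j; rewrite !mxE ltn_ord.
have wS (i : 'I_a) : w i.+1 = w i + h 0 i *: ebase R i.
  apply/rowP => j; rewrite !mxE ltnS leq_eqVlt -addrA; congr (_ + _).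
  have [->|ji] := eqVneq j i; first by rewrite !eqxx ltnn /= add0r mulr1.
  have ji' : (j == i :> nat) = false by exact/negbTE.
  by rewrite ji' /= mulr0 addr0.
have w_near (i : 'I_a) t : `|t| <= `|h 0 i| -> `|w i + t *: ebase R i - z| < r.
  move=> ti; apply: le_lt_trans hr; apply: mx_norm_le => // i' j.
  rewrite (ord1 i') !mxE -(addrA (z 0 j)) (addrC (z 0 j)) addrK eqxx /=.
  have [->|ji] := eqVneq j i; first by rewrite ltnn add0r mulr1 (le_trans ti) ?ler_mx_coord.
  rewrite mulr0 addr0; case: ifP => _; [exact: ler_mx_coord | by rewrite normr0].
have -> : F (h + z) - F z = \sum_(i < a) (F (w i.+1) - F (w i)).
  by rewrite -(big_mkord xpredT (fun k => F (w k.+1) - F (w k))) telescope_sumr // wa w0.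
rewrite /row_dot -sumrB.
apply: le_trans (ler_norm_sum _ _ _) _.
have -> : a%:R * e * `|h| = \sum_(i < a) e * `|h|.
  by rewrite sumr_const card_ord -mulrA mulr_natl.
apply: ler_sum => i _; rewrite wS.
apply: le_trans (increment_along_line (c := h 0 i) (e := e) _) _; last first.
  by rewrite ler_wpM2l // ler_mx_coord.
by move=> t ti; apply: near_z; exact: w_near.
Qed.

Lemma differentiable_of_partials a (F : 'rV[R]_a -> R) z :
  (\forall y \near z, forall i, derivable F y (ebase R i)) ->
  (forall i, {for z, continuous (dpart i F)}) -> differentiable F z.
Proof.
move=> dF cF; pose d i := dpart i F z.
suff approx : F \o shift z = cst (F z) + row_dot d +o_ 0 id.
  apply/(@diff_locallyP R _ R^o z F); rewrite (diff_unique (@row_dot_continuous _ d) approx).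
  by split => //; exact: row_dot_continuous.
apply/eqaddoP => eps eps0.
have a1_gt0 : 0 < a%:R + 1 :> R by rewrite ltr_pwDr.
pose e := eps / (a%:R + 1); have e0 : 0 < e by rewrite divr_gt0.
have near_d : \forall y \near z,
    (forall i, derivable F y (ebase R i)) /\ forall i, `|d i - dpart i F y| < e.
  have near_partials : \forall y \near z, forall i, `|d i - dpart i F y| < e.
    have near_i i : \forall y \near z, `|d i - dpart i F y| < e.
      by have /cvgrPdist_lt/(_ e e0) := cF i.
    exact: (@filter_forall _ _ (fun i y => `|d i - dpart i F y| < e) (nbhs z) _ near_i).
  by near=> y; split; [near: y; exact: dF | near: y; exact: near_partials].
have [r r0 near_r] := (nbhs_ballP _ _).1 near_d.
apply/nbhs_ballP; exists r => // h; rewrite -ball_normE /ball_ /= sub0r normrN => hr.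
have := @partial_increments_estimate a F z r e (ltW e0) _ h hr.
rewrite /= opprD addrA => /(_ _)/le_trans; apply.
- move=> y yz i; have [] := near_r y; first by rewrite -ball_normE /ball_ /= distrC.
  by move=> dFy dy; split; [exact: dFy | rewrite distrC; exact: ltW (dy i)].
- by rewrite ler_wpM2r // /e mulrA ler_pdivrMr // mulrC ler_wpM2l ?ltW // ltrDl.
Unshelve. all: by end_near.
Qed.

Lemma diff_row_dot b (H : 'rV[R]_b -> R) p w :
  differentiable H p -> 'd H p w = row_dot (fun i => dpart i H p) w.
Proof.
move=> dH; rewrite {1}(matrix_sum_delta w) big_ord1 linear_sum; apply: eq_bigr => j _.
by rewrite linearZ /= /dpart /ebase deriveE.
Qed.

Lemma is_derive_comp_differentiable a b (H : 'rV[R]_b -> R) (G : 'rV[R]_a -> 'rV[R]_b) x v :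
  differentiable H (G x) -> derivable G x v ->
  is_derive x v (H \o G) (row_dot (fun i => dpart i H (G x)) ('D_v G x)).
Proof.
move=> dH dG.
pose line t : 'rV[R]_a := t *: v + x.
have line0 : line 0 = x by rewrite /line scale0r add0r.
have line_shift (t : R) : line (t *: 1 + 0) = t *: v + line 0.
  by rewrite /line addr0 scale0r add0r [t *: 1]mulr1.
pose gam t := G (line t).
have gam0 : gam 0 = G x by rewrite /gam line0.
have dgam : differentiable gam 0.
  by apply/derivable1_diffP; exact: (derivable1P G x v).1 dG.
have dHgam : differentiable (H \o gam) 0 by apply: differentiable_comp; rewrite ?gam0.
have [DHG_eq DHG_ex] := derive_comp_affine (H \o G) line_shift.
have [DG_eq _] := derive_comp_affine G line_shift.
rewrite line0 in DHG_eq DHG_ex DG_eq.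
apply: DeriveDef; first by apply/DHG_ex/derivable1_diffP.
rewrite -DHG_eq -DG_eq -[LHS]/('D_1 (H \o gam) 0) -[in RHS]/('D_1 gam 0).
rewrite (deriveE _ dHgam) diff_comp ?gam0 //= (deriveE _ dgam).
exact: diff_row_dot.
Qed.

End Differentiability.

(** * Contractions with g and the geodesic identity *)

Section Contraction.
Variable R : numFieldType.

Lemma exchange_big3 (I J K : finType) (F : I -> J -> K -> R) :
  \sum_i \sum_j \sum_k F i j k = \sum_j \sum_k \sum_i F i j k.
Proof. by rewrite exchange_big; apply: eq_bigr => j _; exact: exchange_big. Qed.

Lemma big_split3 (I J K : finType) (F G : I -> J -> K -> R) :
  \sum_i \sum_j \sum_k (F i j k + G i j k) =
  \sum_i \sum_j \sum_k F i j k + \sum_i \sum_j \sum_k G i j k.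
Proof.
rewrite -big_split; apply: eq_bigr => i _; rewrite -big_split; apply: eq_bigr => j _.
exact: big_split.
Qed.

Lemma exchange_big5 (I J K L M : finType) (F : I -> J -> K -> L -> M -> R) :
  \sum_i \sum_j \sum_k \sum_l \sum_o F i j k l o =
  \sum_j \sum_k \sum_l \sum_o \sum_i F i j k l o.
Proof.
rewrite exchange_big; apply: eq_bigr => j _; rewrite exchange_big; apply: eq_bigr => k _.
exact: exchange_big3.
Qed.

Lemma sum_delta (I : finType) (k : I) (A : I -> R) : \sum_i (i == k)%:R * A i = A k.
Proof.
rewrite (bigD1 k) //= eqxx mul1r big1 ?addr0 // => i /negbTE ->.
exact: mul0r.
Qed.

Lemma sum_delta_mx m n (k : 'I_m) (nu : 'I_n) (A : 'I_m -> 'I_n -> R) :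
  \sum_i \sum_s (delta_mx k nu : 'M[R]_(m, n)) i s * A i s = A k nu.
Proof.
rewrite (bigD1 k) //= [X in _ + X]big1 => [|i ik]; last first.
  by rewrite big1 // => s _; rewrite mxE (negbTE ik) mul0r.
rewrite addr0 (bigD1 nu) //= [X in _ + X]big1 => [|s snu]; last first.
  by rewrite mxE (negbTE snu) andbF mul0r.
by rewrite mxE !eqxx mul1r addr0.
Qed.

Variables (m n : nat) (g : 'I_m -> 'I_m -> R).
Hypothesis g_sym : forall i j, g i j = g j i.

Definition contract2 (P Q : 'M[R]_(m, n)) (X : 'I_n -> 'I_n -> R) : R :=
  \sum_i \sum_j \sum_s \sum_t g i j * P i s * Q j t * X s t.

Definition contract P X := contract2 P P X.

Lemma contract2_tr P Q X : contract2 P Q (fun s t => X t s) = contract2 Q P X.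
Proof.
rewrite /contract2 exchange_big; apply: eq_bigr => j _; apply: eq_bigr => i _.
rewrite exchange_big; apply: eq_bigr => t _; apply: eq_bigr => s _.
by rewrite g_sym; ring.
Qed.

Lemma contract2_delta k nu Q X :
  contract2 (delta_mx k nu) Q X = \sum_j \sum_t g k j * Q j t * X nu t.
Proof.
rewrite /contract2 -(sum_delta_mx k nu (fun i s => \sum_j \sum_t g i j * Q j t * X s t)).
apply: eq_bigr => i _; rewrite exchange_big; apply: eq_bigr => s _.
rewrite mulr_sumr; apply: eq_bigr => j _; rewrite mulr_sumr; apply: eq_bigr => t _.
by ring.
Qed.

Variable P : 'M[R]_(m, n).

Lemma contractD X Y :
  contract P (fun s t => X s t + Y s t) = contract P X + contract P Y.
Proof.
rewrite /contract /contract2 -big_split; apply: eq_bigr => i _; rewrite -big_split.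
apply: eq_bigr => j _; rewrite -big_split; apply: eq_bigr => s _; rewrite -big_split.
by apply: eq_bigr => t _; rewrite mulrDr.
Qed.

Lemma contractZ c X : contract P (fun s t => c * X s t) = c * contract P X.
Proof.
rewrite /contract /contract2 mulr_sumr; apply: eq_bigr => i _; rewrite mulr_sumr.
apply: eq_bigr => j _; rewrite mulr_sumr; apply: eq_bigr => s _; rewrite mulr_sumr.
by apply: eq_bigr => t _; rewrite mulrCA.
Qed.

Lemma contract_antisym X : (forall s t, X s t = - X t s) -> contract P X = 0.
Proof.
move=> X_anti; have : contract P X = - contract P X.
  rewrite {1}/contract -contract2_tr (_ : (fun s t => X t s) = fun s t => -1 * X s t).
    by rewrite -/(contract P _) contractZ mulN1r.
  by apply: funext => s; apply: funext => t; rewrite X_anti mulN1r.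
by move/eqP; rewrite -addr_eq0 -mulr2n mulrn_eq0 /= => /eqP.
Qed.

End Contraction.

Section GeodesicIdentity.
Variables (R : numFieldType) (m n : nat).
Variables (g : 'I_m -> 'I_m -> R) (dg : 'I_m -> 'I_m -> 'I_m -> R)
  (h : 'I_n -> 'I_n -> R) (hx : 'I_m -> 'I_n -> 'I_n -> R) (hy : 'I_n -> 'I_n -> 'I_n -> R)
  (GM : 'I_m -> 'I_m -> 'I_m -> R) (GN : 'I_n -> 'I_n -> 'I_n -> R)
  (p : 'M[R]_(m, n)) (q : 'I_m -> 'I_m -> 'I_n -> R).
Hypotheses (g_sym : forall i j, g i j = g j i) (dg_sym : forall k i j, dg k i j = dg k j i)
  (h_sym : forall s t, h s t = h t s) (GN_sym : forall s a l, GN s a l = GN s l a).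
Hypothesis metric_compat : forall la mu nu,
  hy la mu nu = \sum_s (GN s mu la * h s nu + GN s nu la * h s mu).
Hypothesis base_compat : forall l mu nu,
  h mu nu * (\sum_i \sum_j g i j * GM l i j + \sum_k dg k l k) = - \sum_k hx k mu nu * g l k.

Lemma christoffel_first_kind s t nu :
  \sum_r GN r s t * h r nu = 2^-1 * (hy s t nu + hy t s nu - hy nu s t).
Proof.
rewrite !metric_compat -big_split -sumrB mulr_sumr; apply: eq_bigr => r _ /=.
rewrite (GN_sym r t s) (GN_sym r nu s) (GN_sym r nu t).
have two_neq0 : (2 : R) != 0 by rewrite pnatr_eq0.
by field.
Qed.

Variable nu : 'I_n.

Lemma second_order_terms :
  \sum_s \sum_i \sum_j g i j * h s nu * q i j s = \sum_k \sum_j \sum_t g k j * h nu t * q k j t.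
Proof.
rewrite exchange_big3; apply: eq_bigr => k _; apply: eq_bigr => j _.
by apply: eq_bigr => t _; rewrite h_sym.
Qed.

Lemma base_connection_terms :
  \sum_s \sum_i \sum_j g i j * h s nu * - (\sum_k GM k i j * p k s)
  = \sum_k \sum_j \sum_t (dg k k j * h nu t * p j t + g k j * hx k nu t * p j t).
Proof.
pose C k := \sum_i \sum_j g i j * GM k i j.
transitivity (\sum_k \sum_s - (p k s * h nu s * C k)); last first.
  rewrite exchange_big3; apply: eq_bigr => k _; apply: eq_bigr => s _.
  have -> : \sum_i (dg i i k * h nu s * p k s + g i k * hx i nu s * p k s) =
      p k s * (h nu s * \sum_i dg i k i + \sum_i hx i nu s * g k i).
    rewrite mulrDr !mulr_sumr -big_split; apply: eq_bigr => i _ /=.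
    by rewrite dg_sym g_sym; ring.
  by rewrite -[\sum_i hx i nu s * g k i]opprK -base_compat /C; ring.
transitivity (\sum_s \sum_k \sum_i \sum_j - (p k s * h nu s * (g i j * GM k i j))).
  apply: eq_bigr => s _; rewrite [RHS]exchange_big3; apply: eq_bigr => i _.
  apply: eq_bigr => j _; rewrite mulrN mulr_sumr -sumrN; apply: eq_bigr => k _.
  by rewrite h_sym; ring.
rewrite exchange_big; apply: eq_bigr => k _; apply: eq_bigr => s _.
rewrite /C mulr_sumr -sumrN; apply: eq_bigr => i _; rewrite mulr_sumr -sumrN.
by apply: eq_bigr => j _; ring.
Qed.

Lemma hy_sym a s t : hy a s t = hy a t s.
Proof. by rewrite !metric_compat; apply: eq_bigr => r _; rewrite addrC. Qed.

Lemma fibre_connection_terms :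
  \sum_s \sum_i \sum_j g i j * h s nu * (\sum_a \sum_l GN s a l * p i a * p j l)
  = - 2^-1 * contract g p (hy nu)
    + \sum_k \sum_j \sum_t g k j * (\sum_a p k a * hy a nu t) * p j t.
Proof.
pose Gamma s t := \sum_r GN r s t * h r nu.
have -> : \sum_s \sum_i \sum_j g i j * h s nu * (\sum_a \sum_l GN s a l * p i a * p j l)
    = contract g p Gamma.
  transitivity (\sum_s \sum_i \sum_j \sum_a \sum_l g i j * p i a * p j l * (GN s a l * h s nu)).
    apply: eq_bigr => s _; apply: eq_bigr => i _; apply: eq_bigr => j _.
    rewrite mulr_sumr; apply: eq_bigr => a _; rewrite mulr_sumr.
    by apply: eq_bigr => l _; ring.
  rewrite exchange_big5; apply: eq_bigr => i _; apply: eq_bigr => j _.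
  by apply: eq_bigr => a _; apply: eq_bigr => l _; rewrite mulr_sumr.
have -> : \sum_k \sum_j \sum_t g k j * (\sum_a p k a * hy a nu t) * p j t
    = contract g p (fun s t => hy s nu t).
  apply: eq_bigr => k _; apply: eq_bigr => j _; rewrite [RHS]exchange_big.
  apply: eq_bigr => t _; rewrite mulr_sumr mulr_suml; apply: eq_bigr => a _.
  by ring.
pose K s t := Gamma s t + (2^-1 * hy nu s t + -1 * hy s nu t).
have K_anti s t : K s t = - K t s.
  rewrite /K /Gamma !christoffel_first_kind (hy_sym s nu t) (hy_sym t nu s) (hy_sym nu t s).
  have two_neq0 : (2 : R) != 0 by rewrite pnatr_eq0.
  by field.
apply/eqP; rewrite -subr_eq0; apply/eqP; transitivity (contract g p K).
  by rewrite /K !contractD !contractZ; ring.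
exact: contract_antisym.
Qed.

Lemma geodesic_EL_identity :
  \sum_s \sum_i \sum_j g i j * h s nu *
      (q i j s - \sum_k GM k i j * p k s + \sum_a \sum_l GN s a l * p i a * p j l)
  = - 2^-1 * contract g p (hy nu)
    + \sum_k \sum_j \sum_t (dg k k j * h nu t * p j t + g k j * hx k nu t * p j t
        + g k j * (\sum_a p k a * hy a nu t) * p j t + g k j * h nu t * q k j t).
Proof.
transitivity (\sum_s \sum_i \sum_j g i j * h s nu * q i j s
    + \sum_s \sum_i \sum_j g i j * h s nu * - (\sum_k GM k i j * p k s)
    + \sum_s \sum_i \sum_j g i j * h s nu * (\sum_a \sum_l GN s a l * p i a * p j l)).
  rewrite -!big_split3; apply: eq_bigr => s _; apply: eq_bigr => i _; apply: eq_bigr => j _.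
  by ring.
rewrite second_order_terms base_connection_terms fibre_connection_terms.
by rewrite [in RHS]big_split3 [in RHS]big_split3; ring.
Qed.

End GeodesicIdentity.

(** * The Euler-Lagrange expression of the Lagrangian *)

Section ContractDerivatives.
Variable R : realType.

Lemma is_derive_sumf (V : normedModType R) k (F : 'I_k -> V -> R) x v (dF : 'I_k -> R) :
  (forall i, is_derive x v (F i) (dF i)) ->
  is_derive x v (fun y => \sum_i F i y) (\sum_i dF i).
Proof. by move=> dF_; rewrite -fct_sumE; exact: is_derive_sum. Qed.

Lemma is_derive_mull (V : normedModType R) (c : R) (f : V -> R) x v df :
  is_derive x v f df -> is_derive x v (fun y => c * f y) (c * df).
Proof. exact: is_deriveZ. Qed.

Lemma is_derive_near_eq (V : normedModType R) (f f' : V -> R) x v df :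
  (\forall y \near x, f y = f' y) -> is_derive x v f df -> is_derive x v f' df.
Proof.
move=> ff' [df_ex df_val]; apply: DeriveDef; first exact: near_eq_derivable df_ex.
by rewrite -(near_eq_derive v ff').
Qed.

Variables (m n : nat) (g : 'I_m -> 'I_m -> R).

Lemma is_derive_contract_coef (V : normedModType R) (P : 'M[R]_(m, n))
    (X : V -> 'I_n -> 'I_n -> R) (dX : 'I_n -> 'I_n -> R) y v :
  (forall s t, is_derive y v (fun y => X y s t) (dX s t)) ->
  is_derive y v (fun y => contract g P (X y)) (contract g P dX).
Proof.
move=> dX_; exact: is_derive_sumf (fun i => is_derive_sumf (fun j =>
  is_derive_sumf (fun s => is_derive_sumf (fun t => is_derive_mull _ (dX_ s t))))).
Qed.

Lemma is_derive_contract_jet (X : 'I_n -> 'I_n -> R) (P D : 'M[R]_(m, n)) :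
  is_derive P D (fun Q => contract g Q X) (contract2 g D P X + contract2 g P D X).
Proof.
have dterm i j s t : is_derive P D (fun Q : 'M[R]_(m, n) => g i j * Q i s * Q j t * X s t)
    (g i j * X s t * (P i s * D j t + P j t * D i s)).
  rewrite (_ : (fun Q : 'M[R]_(m, n) => _) =
               fun Q : 'M[R]_(m, n) => g i j * X s t * (Q i s * Q j t)); last first.
    by apply: funext => Q; ring.
  exact: is_derive_mull (is_deriveM (is_derive_coord P D i s) (is_derive_coord P D j t)).
apply: is_derive_eq.
  exact: is_derive_sumf (fun i => is_derive_sumf (fun j =>
    is_derive_sumf (fun s => is_derive_sumf (fun t => dterm i j s t)))).
rewrite /contract2 -big_split; apply: eq_bigr => i _; rewrite -big_split.
apply: eq_bigr => j _; rewrite -big_split; apply: eq_bigr => s _; rewrite -big_split.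
by apply: eq_bigr => t _ /=; ring.
Qed.

End ContractDerivatives.

Section GeodesicLagrangian.
Variables (R : realType) (m n : nat) (U : set 'rV[R]_m) (V : set 'rV[R]_n).
Variables (g : 'I_m -> 'I_m -> 'rV[R]_m -> R)
  (h : 'I_n -> 'I_n -> 'rV[R]_m -> 'rV[R]_n -> R).
Hypotheses (U_open : open U) (V_open : open V)
  (g_smooth : forall i j, smooth_on U (g i j)) (h_smooth : forall s t, smooth_on2 U V (h s t))
  (g_sym : forall i j x, U x -> g i j x = g j i x)
  (h_sym : forall s t x y, U x -> V y -> h s t x y = h t s x y).

Definition geodesic_lagrangian x y (P : 'M[R]_(m, n)) : R :=
  - 2^-1 * contract (fun i j => g i j x) P (fun s t => h s t x y).

Let UV := [set w : 'rV[R]_(m + n) | U (lsubmx w) /\ V (rsubmx w)].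
Let hUV s t (w : 'rV[R]_(m + n)) := h s t (lsubmx w) (rsubmx w).

Lemma open_UV : open UV.
Proof.
apply: openI; apply: open_comp => // w _; [exact: continuous_lsubmx | exact: continuous_rsubmx].
Qed.

Lemma UV_row_mx x y : U x -> V y -> UV (row_mx x y).
Proof. by move=> Ux Vy; rewrite /UV /= row_mxKl row_mxKr. Qed.

Lemma differentiable_hUV s t x y : U x -> V y -> differentiable (hUV s t) (row_mx x y).
Proof.
move=> Ux Vy; have UVxy := UV_row_mx Ux Vy.
apply: differentiable_of_partials => [|i].
  by apply: filterS (near_open open_UV UVxy) => w UVw; exact: (smooth_on_at (h_smooth s t) UVw).2.
exact: (smooth_on_at (smooth_on_dpart i (h_smooth s t)) UVxy).1.
Qed.

Lemma row_mx_shiftr (x : 'rV[R]_m) (y : 'rV[R]_n) (c : R) nu :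
  row_mx x (c *: ebase R nu + y) = c *: ebase R (rshift m nu) + row_mx x y.
Proof.
rewrite (_ : ebase R (rshift m nu) = row_mx 0 (ebase R nu)).
  by rewrite scale_row_mx add_row_mx scaler0 add0r.
apply/rowP => j; rewrite !mxE; case: (split_ordP j) => j' ->; rewrite !mxE /=.
  by rewrite eq_lrshift.
by rewrite eq_rshift.
Qed.

Lemma row_mx_shiftl (x : 'rV[R]_m) (y : 'rV[R]_n) (c : R) k :
  row_mx (c *: ebase R k + x) y = c *: ebase R (lshift n k) + row_mx x y.
Proof.
rewrite (_ : ebase R (lshift n k) = row_mx (ebase R k) 0).
  by rewrite scale_row_mx add_row_mx scaler0 add0r.
apply/rowP => j; rewrite !mxE; case: (split_ordP j) => j' ->; rewrite !mxE /=.
  by rewrite eq_lshift.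
by rewrite eq_rlshift.
Qed.

Lemma h_fibreE s t x : h s t x = hUV s t \o row_mx x.
Proof. by apply: funext => y; rewrite /hUV /= row_mxKl row_mxKr. Qed.

Lemma h_baseE s t y : h s t ^~ y = hUV s t \o row_mx ^~ y.
Proof. by apply: funext => x; rewrite /hUV /= row_mxKl row_mxKr. Qed.

Lemma dpart_h_fibre s t nu x y :
  dpart nu (h s t x) y = dpart (rshift m nu) (hUV s t) (row_mx x y).
Proof. by rewrite /dpart h_fibreE (derive_comp_affine _ (row_mx_shiftr x y ^~ nu)).1. Qed.

Lemma dpart_h_base s t k x y :
  dpart k (h s t ^~ y) x = dpart (lshift n k) (hUV s t) (row_mx x y).
Proof. by rewrite /dpart h_baseE (derive_comp_affine _ (row_mx_shiftl x y ^~ k)).1. Qed.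

Lemma is_derive_h_fibre s t nu x y : U x -> V y ->
  is_derive y (ebase R nu) (h s t x) (dpart nu (h s t x) y).
Proof.
move=> Ux Vy; apply: DeriveDef => //; rewrite h_fibreE.
apply/(derive_comp_affine _ (row_mx_shiftr x y ^~ nu)).2.
exact: (smooth_on_at (h_smooth s t) (UV_row_mx Ux Vy)).2.
Qed.

Lemma is_derive_h_section s t k (f : 'rV[R]_m -> 'rV[R]_n) x :
  smooth_section U V f -> U x ->
  is_derive x (ebase R k) (fun x' => h s t x' (f x'))
    (dpart k (h s t ^~ (f x)) x + \sum_a jet1 f x k a * dpart a (h s t x) (f x)).
Proof.
move=> [fUV f_smooth] Ux.
pose G x' : 'rV[R]_(m + n) := row_mx x' (f x').
have dG_base c : is_derive x (ebase R k) (fun x' => G x' 0 (lshift n c)) (c == k)%:R.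
  rewrite (_ : (fun x' : 'rV[R]_m => _) = fun x' : 'rV[R]_m => x' 0 c); last first.
    by apply: funext => x'; rewrite /G row_mxEl.
  by rewrite -ebaseE; exact: is_derive_coord.
have dG_fibre a : is_derive x (ebase R k) (fun x' => G x' 0 (rshift m a)) (jet1 f x k a).
  rewrite (_ : (fun x' : 'rV[R]_m => _) = fun x' : 'rV[R]_m => f x' 0 a); last first.
    by apply: funext => x'; rewrite /G row_mxEr.
  by apply: DeriveDef; [exact: (smooth_on_at (f_smooth a) Ux).2 | rewrite mxE].
have dG : derivable G x (ebase R k).
  apply/derivable_mxP => i j; rewrite (ord1 i).
  by case: (split_ordP j) => c ->; [have [] := dG_base c | have [] := dG_fibre c].
have hG : (fun x' => h s t x' (f x')) = hUV s t \o G.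
  by apply: funext => x'; rewrite /hUV /G /= row_mxKl row_mxKr.
rewrite hG; apply: is_derive_eq.
  apply: is_derive_comp_differentiable dG.
  by rewrite /G; apply: differentiable_hUV => //; exact: fUV.
rewrite /row_dot big_split_ord (derive_mx dG) /=; congr (_ + _).
  transitivity (\sum_(c < m) (c == k)%:R * dpart (lshift n c) (hUV s t) (G x)).
    by apply: eq_bigr => c _; rewrite mxE; have [_ ->] := dG_base c.
  by rewrite sum_delta dpart_h_base.
by apply: eq_bigr => a _; rewrite mxE dpart_h_fibre; have [_ ->] := dG_fibre a.
Qed.

Lemma dL_dy_lagrangian nu x y P : U x -> V y ->
  dL_dy geodesic_lagrangian nu x y P =
  - 2^-1 * contract (fun i j => g i j x) P (fun s t => dpart nu (h s t x) y).
Proof.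
move=> Ux Vy; apply: derive_val; apply: is_derive_mull.
by apply: is_derive_contract_coef => s t; exact: is_derive_h_fibre.
Qed.

Lemma dL_dp_lagrangian k nu x y P : U x -> V y ->
  dL_dp geodesic_lagrangian k nu x y P = - \sum_j \sum_t g k j x * P j t * h nu t x y.
Proof.
move=> Ux Vy; apply: derive_val; apply: is_derive_eq.
  exact: is_derive_mull (is_derive_contract_jet _ _ _ _).
rewrite -[in X in _ + X](contract2_tr (fun i j => g_sym i j Ux)).
rewrite (_ : (fun s t => h t s x y) = fun s t => h s t x y); last first.
  by apply: funext => s; apply: funext => t; rewrite h_sym.
rewrite contract2_delta; set c := \sum_j _.
have two_neq0 : (2 : R) != 0 by rewrite pnatr_eq0.
by field.
Qed.

Lemma is_derive_momentum k nu (f : 'rV[R]_m -> 'rV[R]_n) x :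
  smooth_section U V f -> U x ->
  is_derive x (ebase R k) (fun x' => dL_dp geodesic_lagrangian k nu x' (f x') (jet1 f x'))
    (- \sum_j \sum_t (dpart k (g k j) x * h nu t x (f x) * jet1 f x j t
        + g k j x * dpart k (h nu t ^~ (f x)) x * jet1 f x j t
        + g k j x * (\sum_a jet1 f x k a * dpart a (h nu t x) (f x)) * jet1 f x j t
        + g k j x * h nu t x (f x) * jet2 f k j t x)).
Proof.
move=> sf Ux; have [fUV f_smooth] := sf.
have dg j : is_derive x (ebase R k) (g k j) (dpart k (g k j) x).
  exact: DeriveDef ((smooth_on_at (g_smooth k j) Ux).2 k) erefl.
have djet j t : is_derive x (ebase R k) (fun x' => jet1 f x' j t) (jet2 f k j t x).
  rewrite (_ : (fun x' : 'rV[R]_m => _) = dpart j (fun y => f y 0 t)); last first.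
    by apply: funext => x'; rewrite mxE.
  exact: DeriveDef ((smooth_on_at (smooth_on_dpart j (f_smooth t)) Ux).2 k) erefl.
apply: (@is_derive_near_eq _ _
  (fun x' => - \sum_j \sum_t g k j x' * jet1 f x' j t * h nu t x' (f x'))).
  apply: filterS (near_open U_open Ux) => x' Ux'.
  by rewrite dL_dp_lagrangian //; exact: fUV.
apply: is_derive_eq.
  apply: is_deriveN; apply: is_derive_sumf => j; apply: is_derive_sumf => t.
  exact: is_deriveM (is_deriveM (dg j) (djet j t)) (is_derive_h_section _ _ _ sf Ux).
congr (- _); apply: eq_bigr => j _; apply: eq_bigr => t _.
by rewrite /GRing.scale /= !fctE; ring.
Qed.

Lemma smooth_lagr_geodesic : smooth_lagr U V geodesic_lagrangian.
Proof.
pose D := [set z : 'rV[R]_(m + n + m * n) | U (lsubmx (lsubmx z)) /\ V (rsubmx (lsubmx z))].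
have D_open : open D by apply: open_comp open_UV => z _; exact: continuous_lsubmx.
have proj_smooth (F : 'rV[R]_(m + n) -> R) : smooth_on UV F -> smooth_on D (F \o lsubmx).
  apply: (@smooth_on_comp _ _ _ UV D lsubmx F open_UV D_open) => //.
  - exact: continuous_lsubmx.
  - exact: lsubmx_ebase.
have g_smooth' i j : smooth_on D (fun z => g i j (lsubmx (lsubmx z))).
  apply: proj_smooth (@smooth_on_comp _ _ _ U UV lsubmx _ U_open open_UV _ _ _ (g_smooth i j)).
  - exact: continuous_lsubmx.
  - by move=> w [].
  - exact: lsubmx_ebase.
have P_smooth i s : smooth_on D (fun z => (vec_mx (rsubmx z) : 'M[R]_(m, n)) i s).
  apply: (@smooth_on_eq _ _ D D_open (fun z => z 0 (rshift (m + n) (mxvec_index i s)))).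
    by move=> z _; rewrite !mxE.
  exact: smooth_on_coord.
apply: (smooth_onM D_open (smooth_on_cst D_open _)).
do 4 apply: (smooth_on_sum D_open) => ?.
repeat apply: (smooth_onM D_open); [exact: g_smooth' | exact: P_smooth | exact: P_smooth | ].
exact: proj_smooth (h_smooth _ _).
Qed.

Variables (GM : 'I_m -> 'I_m -> 'I_m -> 'rV[R]_m -> R) (GN : 'I_n -> 'I_n -> 'I_n -> 'rV[R]_n -> R).
Hypothesis GN_sym : forall s a l y, V y -> GN s a l y = GN s l a y.
Hypothesis metric_compat : forall (mu nu la : 'I_n) x y, U x -> V y ->
  dpart la (h mu nu x) y = \sum_s (GN s mu la y * h s nu x y + GN s nu la y * h s mu x y).
Hypothesis base_compat : forall (l : 'I_m) (mu nu : 'I_n) x y, U x -> V y ->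
  h mu nu x y * (\sum_i \sum_j g i j x * GM l i j x + \sum_p dpart p (g l p) x)
  = - \sum_p dpart p (h mu nu ^~ y) x * g l p x.

Lemma geodesic_EL (f : 'rV[R]_m -> 'rV[R]_n) nu x : smooth_section U V f -> U x ->
  geodE GM GN g h f nu x = EL geodesic_lagrangian f nu x.
Proof.
move=> sf Ux; have Vfx := sf.1 x Ux.
rewrite /EL dL_dy_lagrangian //.
under eq_bigr => k _ do
  rewrite {1}/dpart (@derive_val _ _ _ _ _ _ _ (is_derive_momentum k nu sf Ux)).
rewrite sumrN opprK /geodE.
apply: (@geodesic_EL_identity _ _ _ (fun i j => g i j x) (fun k i j => dpart k (g i j) x)
  (fun s t => h s t x (f x)) (fun k s t => dpart k (h s t ^~ (f x)) x)
  (fun a s t => dpart a (h s t x) (f x)) (fun k i j => GM k i j x) (fun s a l => GN s a l (f x))).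
- by move=> i j; exact: g_sym.
- move=> k i j; apply: near_eq_derive.
  by apply: filterS (near_open U_open Ux) => x' Ux'; exact: g_sym.
- by move=> s t; exact: h_sym.
- by move=> s a l; exact: GN_sym.
- by move=> la mu nu'; exact: metric_compat.
- by move=> l mu nu'; exact: base_compat.
Qed.

End GeodesicLagrangian.

Unset Implicit Arguments. Set Strict Implicit. Set Printing Implicit Defensive.

Theorem mainTheorem1 (R : realType) (m n : nat)
  (U : set 'rV[R]_m) (V : set 'rV[R]_n)
  (GM : 'I_m -> 'I_m -> 'I_m -> 'rV[R]_m -> R)
  (GN : 'I_n -> 'I_n -> 'I_n -> 'rV[R]_n -> R)
  (g : 'I_m -> 'I_m -> 'rV[R]_m -> R)
  (h : 'I_n -> 'I_n -> 'rV[R]_m -> 'rV[R]_n -> R) :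
  open U -> open V ->
  (* smooth data *)
  (forall k i j, smooth_on U (GM k i j)) ->
  (forall s a l, smooth_on V (GN s a l)) ->
  (forall i j, smooth_on U (g i j)) ->
  (forall s t, smooth_on2 U V (h s t)) ->
  (* torsion-free connections *)
  (forall k i j x, U x -> GM k i j x = GM k j i x) ->
  (forall s a l y, V y -> GN s a l y = GN s l a y) ->
  (* g symmetric nondegenerate inverse metric *)
  (forall i j x, U x -> g i j x = g j i x) ->
  (forall x, U x -> \det (\matrix_(i < m, j < m) g i j x) != 0) ->
  (* h_x symmetric nondegenerate metric on each fibre *)
  (forall s t x y, U x -> V y -> h s t x y = h t s x y) ->
  (forall x y, U x -> V y -> \det (\matrix_(s < n, t < n) h s t x y) != 0) ->
  (* (1) fibrewise metric compatibility of the connection on N *)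
  (forall (mu nu la : 'I_n) x y, U x -> V y ->
     dpart la (h mu nu x) y =
     \sum_(s < n) (GN s mu la y * h s nu x y + GN s nu la y * h s mu x y)) ->
  (* (2) dependence of h on the base coordinates *)
  (forall (l : 'I_m) (mu nu : 'I_n) x y, U x -> V y ->
     h mu nu x y * (\sum_(i < m) \sum_(j < m) g i j x * GM l i j x
                    + \sum_(p < m) dpart p (g l p) x)
     = - \sum_(p < m) dpart p (fun x' => h mu nu x' y) x * g l p x) ->
  (* conclusion: E is (locally) variational *)
  forall x0 y0, U x0 -> V y0 ->
  exists (U0 : set 'rV[R]_m) (V0 : set 'rV[R]_n)
         (L : 'rV[R]_m -> 'rV[R]_n -> 'M[R]_(m, n) -> R),
    [/\ open U0 /\ open V0, U0 `<=` U /\ V0 `<=` V, U0 x0 /\ V0 y0,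
        smooth_lagr U0 V0 L &
        forall f : 'rV[R]_m -> 'rV[R]_n, smooth_section U0 V0 f ->
        forall (nu : 'I_n) x, U0 x -> geodE GM GN g h f nu x = EL L f nu x].
Proof.
move=> U_open V_open _ _ g_smooth h_smooth _ GN_sym g_sym _ h_sym _ metric_compat base_compat
  x0 y0 Ux0 Vy0.
exists U, V, (geodesic_lagrangian g h); split; [by split | by split | by split | | ].
  exact: smooth_lagr_geodesic.
by move=> f sf nu x Ux; apply: (geodesic_EL (U := U) (V := V)).
Qed.
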